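(* Let $d\ge 1$ and $n\ge 2$ be integers, $\kappa_d$ the volume of the $d$-dimensional unit ball, $V>0$, $-d/2<\tau_1<\dots<\tau_n$ reals, $a_i=\tau_i+d$ for $i\in[n]$, $b=\sum_{k=1}^n\prod_{l\in[n]\setminus\{k\}}a_l^2$ and $P=\prod_{k=1}^n a_k^2$. Let $\Sigma_n$ have entries $(\Sigma_n)_{ij}=\frac{Vd^2\kappa_d^2}{a_ia_j}$, let $\lambda_1=0$, $\lambda_2=Vd^2\kappa_d^2\sum_{i=1}^n a_i^{-2}$, and let $D=\operatorname{diag}(\lambda_1,\dots,\lambda_1,\lambda_2)\in\mathbb{R}^{n\times n}$. Let $S\in\mathbb{R}^{n\times n}$ have columns $v_1,\dots,v_n$, where $v_k=\frac{a_1}{a_{k+1}}e_1-e_{k+1}$ for $k=1,\dots,n-1$ ($e_i$ the standard basis vectors) and $v_n=(a_n/a_1,\dots,a_n/a_{n-1},1)^t$. Then $S$ is invertible, $\Sigma_n$ is similar to $D$ with $D=S^{-1}\Sigma_nS$, and $S^{-1}=(\tilde s_{ij})$ has entries $$\tilde s_{ij}=\begin{cases}\dfrac{P}{a_ja_nb} & \text{if } i=n,\\[2mm] -\dfrac{\sum_{k\in[n]\setminus\{i+1\}}a_{i+1}^2\prod_{l\in[n]\setminus\{k,i+1\}}a_l^2}{b} & \text{if } i<n,\ j=i+1,\\[2mm] \dfrac{P}{a_{i+1}a_jb} & \text{otherwise.}\end{cases}$$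
   Context: $\Sigma_n$ is the asymptotic covariance matrix of normalized length power functionals of a random geometric graph in the supercritical regime; $V$ is the volume of the window $W$. $[n]=\{1,\dots,n\}$. *)

From HB Require Import structures.
From mathcomp Require Import all_boot all_order all_algebra.
From mathcomp Require Import all_classical all_reals.
From mathcomp Require Import trigo.
Set Implicit Arguments. Unset Strict Implicit. Unset Printing Implicit Defensive.
Import Order.TTheory GRing.Theory Num.Theory.
Local Open Scope ring_scope.

(* kappa d = volume of the d-dimensional Euclidean unit ball:
   kappa 0 = 1, kappa 1 = 2, kappa (d+2) = 2 pi / (d+2) * kappa d. *)
Fixpoint kappa {R : realType} (d : nat) : R :=
  match d with
  | 0%N => 1
  | 1%N => 2
  | (k.+2)%N => (2 * pi / (k.+2)%:R) * kappa k
  end.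

(* All indices below are 1-based natural numbers, as in the paper;
   the entry (i,j) of an n x n matrix (i,j : 'I_n, 0-based) is the paper's
   entry (i+1, j+1). *)
Section Defs.
Variables (R : realType) (n : nat) (a : nat -> R).

Definition bcoef : R :=
  \sum_(1 <= k < n.+1) \prod_(1 <= l < n.+1 | l != k) a l ^+ 2.

Definition Pcoef : R := \prod_(1 <= k < n.+1) a k ^+ 2.

Definition Sigma_mx (V : R) (d : nat) : 'M[R]_n :=
  \matrix_(i, j) (V * (d%:R) ^+ 2 * (kappa d) ^+ 2 / (a i.+1 * a j.+1)).

Definition lambda2 (V : R) (d : nat) : R :=
  V * (d%:R) ^+ 2 * (kappa d) ^+ 2 * \sum_(1 <= i < n.+1) (a i) ^-2.

Definition D_mx (V : R) (d : nat) : 'M[R]_n :=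
  \matrix_(i, j) (if (i == j :> nat) && (i.+1 == n) then lambda2 V d else 0).

Definition e_ (i r : nat) : R := if r == i then 1 else 0.

Definition S_col (k r : nat) : R :=
  if (k < n)%N then (a 1 / a k.+1) * e_ 1 r - e_ k.+1 r
  else (if r == n then 1 else a n / a r).

Definition S_mx : 'M[R]_n := \matrix_(i, j) S_col j.+1 i.+1.

Definition Sinv_entry (i j : nat) : R :=
  if i == n then Pcoef / (a j * a n * bcoef)
  else if j == i.+1 then
    - ((\sum_(1 <= k < n.+1 | k != i.+1)
          a i.+1 ^+ 2 * \prod_(1 <= l < n.+1 | (l != k) && (l != i.+1)) a l ^+ 2)
       / bcoef)
  else Pcoef / (a i.+1 * a j * bcoef).

Definition Sinv_mx : 'M[R]_n := \matrix_(i, j) Sinv_entry i.+1 j.+1.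

End Defs.

From HB Require Import structures.
From mathcomp Require Import all_boot all_order all_algebra.
From mathcomp Require Import all_classical all_reals.
From mathcomp Require Import trigo.
From mathcomp Require Import ring lra zify.
Import Order.TTheory GRing.Theory Num.Theory.
Local Open Scope ring_scope.
Set Implicit Arguments. Unset Strict Implicit.

(* With c = V d^2 kappa_d^2 and u = (1/a_1, ..., 1/a_n), Sigma_n = c u u^T has
   rank one.  The first n - 1 columns of S are orthogonal to u, so they span
   the kernel, while v_n = a_n u is an eigenvector for c |u|^2 = lambda_2;
   hence Sigma_n S = S D.  Since b = P |u|^2, the rows of the claimed inverse
   are u / (a_(i+1) |u|^2) - e_(i+1) for i < n and u / (a_n |u|^2) for i = n,
   and they are dual to the columns of S because u . v_k = 0 for k < n and
   u . v_n = a_n |u|^2. *)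

Section EigenBasis.
Variables (R : realType) (n : nat) (a : nat -> R).

Lemma sum_ord_shift (F : nat -> R) :
  \sum_(k < n) F k.+1 = \sum_(1 <= k < n.+1) F k.
Proof. by rewrite big_add1 /= big_mkord. Qed.

Lemma sum_e_mul p (F : nat -> R) :
  \sum_(1 <= k < n.+1) e_ R p k * F k = if (0 < p <= n)%N then F p else 0.
Proof.
rewrite (eq_bigr (fun k => if k == p then F k else 0)); last first.
  by move=> k _; rewrite /e_; case: eqP; rewrite ?mul1r ?mul0r.
by rewrite -big_mkcond big_nat1_eq ltnS.
Qed.

Lemma sum_mul_e p (F : nat -> R) :
  \sum_(1 <= k < n.+1) F k * e_ R p k = if (0 < p <= n)%N then F p else 0.
Proof. by rewrite -sum_e_mul; apply: eq_bigr => k _; rewrite mulrC. Qed.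

Hypothesis a_neq0 : forall k, (0 < k <= n)%N -> a k != 0.

Definition inv_sq_sum : R := \sum_(1 <= k < n.+1) (a k)^-2.

Lemma inv_sq_sum_gt0 : (0 < n)%N -> 0 < inv_sq_sum.
Proof.
move=> n_gt0; rewrite /inv_sq_sum big_ltn ?ltnS //.
apply: ltr_wpDr; first by apply: sumr_ge0 => k _; rewrite invr_ge0 sqr_ge0.
by rewrite invr_gt0 exprn_even_gt0 //= a_neq0.
Qed.

Lemma Pcoef_neq0 : Pcoef n a != 0.
Proof.
rewrite /Pcoef big_nat_cond prodf_seq_neq0; apply/allP => k _.
by rewrite andbT ltnS; apply/implyP => /a_neq0 /expf_neq0->.
Qed.

Lemma mem_iota_range k : (0 < k <= n)%N -> k \in index_iota 1 n.+1.
Proof. by rewrite mem_index_iota ltnS. Qed.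

Lemma prod_sq_but k : (0 < k <= n)%N ->
  \prod_(1 <= l < n.+1 | l != k) a l ^+ 2 = Pcoef n a / a k ^+ 2.
Proof.
move=> k_in; rewrite /Pcoef (bigD1_seq k) ?mem_iota_range ?iota_uniq //=.
by rewrite mulrAC divff ?mul1r // expf_neq0 // a_neq0.
Qed.

Lemma prod_sq_but2 k m : (0 < k <= n)%N -> (0 < m <= n)%N -> m != k ->
  a m ^+ 2 * \prod_(1 <= l < n.+1 | (l != k) && (l != m)) a l ^+ 2
  = Pcoef n a / a k ^+ 2.
Proof.
move=> k_in m_in mk; rewrite -prod_sq_but // [RHS]big_mkcond /=.
rewrite (bigD1_seq m) ?mem_iota_range ?iota_uniq //= mk.
by rewrite big_mkcondl.
Qed.

Lemma sum_Pcoef_div_sq : \sum_(1 <= k < n.+1) Pcoef n a / a k ^+ 2 = Pcoef n a * inv_sq_sum.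
Proof. by rewrite /inv_sq_sum mulr_sumr. Qed.

Lemma bcoefE : bcoef n a = Pcoef n a * inv_sq_sum.
Proof.
rewrite /bcoef -sum_Pcoef_div_sq; apply: eq_big_nat => k.
by rewrite ltnS => /prod_sq_but.
Qed.

Lemma sum_prod_sq_but2 m : (0 < m <= n)%N ->
  \sum_(1 <= k < n.+1 | k != m)
     a m ^+ 2 * \prod_(1 <= l < n.+1 | (l != k) && (l != m)) a l ^+ 2
  = Pcoef n a * inv_sq_sum - Pcoef n a / a m ^+ 2.
Proof.
move=> m_in; rewrite -sum_Pcoef_div_sq (bigD1_seq m) ?mem_iota_range ?iota_uniq //=.
rewrite addrC addrK big_seq_cond [RHS]big_seq_cond; apply: eq_bigr => k.
by rewrite mem_index_iota ltnS => /andP[k_in mk]; rewrite prod_sq_but2 // eq_sym.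
Qed.

Lemma eq_sum_range (F G : nat -> R) : (forall k, (0 < k <= n)%N -> F k = G k) ->
  \sum_(1 <= k < n.+1) F k = \sum_(1 <= k < n.+1) G k.
Proof. by move=> FG; apply: eq_big_nat => k; rewrite ltnS; apply: FG. Qed.

Lemma S_col_last r : (0 < r <= n)%N -> S_col n a n r = a n / a r.
Proof. by move=> r_in; rewrite /S_col ltnn; case: eqP r_in => // -> /a_neq0/divff. Qed.

Lemma S_col_lower k r : (k < n)%N -> (1 < r)%N -> S_col n a k r = - e_ R k.+1 r.
Proof. by move=> k_lt_n r_gt1; rewrite /S_col k_lt_n /e_ gtn_eqF // mulr0 sub0r. Qed.

Lemma sum_inv_mul_S_col k : (0 < k <= n)%N ->
  \sum_(1 <= r < n.+1) (a r)^-1 * S_col n a k r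
  = if k == n then a n * inv_sq_sum else 0.
Proof.
case/andP=> k_gt0; rewrite leq_eqVlt => /orP[/eqP-> | k_lt_n].
  rewrite eqxx /inv_sq_sum mulr_sumr; apply: eq_sum_range => r r_in.
  by rewrite S_col_last // mulrCA -expr2 exprVn.
rewrite ltn_eqF // /S_col k_lt_n.
under eq_bigr => r _ do rewrite mulrBr mulrA.
rewrite sumrB !sum_mul_e /= k_lt_n (leq_trans _ k_lt_n) //.
by rewrite mulKf ?subrr // a_neq0 // (leq_trans _ k_lt_n).
Qed.

Lemma Sinv_entryE i j : (0 < i <= n)%N -> (0 < j <= n)%N ->
  Sinv_entry n a i j = (a (minn i.+1 n) * inv_sq_sum)^-1 / a j - e_ R i.+1 j.
Proof.
move=> i_in j_in.
have s_neq0 : inv_sq_sum != 0 by rewrite gt_eqF // inv_sq_sum_gt0 //; lia.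
have P_neq0 := Pcoef_neq0; have aj_neq0 := a_neq0 j_in.
rewrite /Sinv_entry /e_ bcoefE.
case: eqP => [-> | /eqP i_neq_n].
  have an_neq0 : a n != 0 by apply: a_neq0; lia.
  rewrite (minn_idPr (leqnSn n)) ltn_eqF ?subr0; last by move: j_in; lia.
  by field; rewrite ?P_neq0 ?s_neq0 ?aj_neq0 ?an_neq0.
have i1_in : (0 < i.+1 <= n)%N by lia.
have -> : minn i.+1 n = i.+1 by lia.
have ai1_neq0 := a_neq0 i1_in.
case: eqP => [-> | _]; first rewrite sum_prod_sq_but2 //; rewrite ?subr0;
  by field; rewrite ?P_neq0 ?s_neq0 ?aj_neq0 ?ai1_neq0.
Qed.

Lemma Sinv_mx_mulS : Sinv_mx n a *m S_mx n a = 1%:M.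
Proof.
apply/matrixP => i j; rewrite !mxE.
have i_in : (0 < i.+1 <= n)%N by rewrite ltn_ord.
have j_in : (0 < j.+1 <= n)%N by rewrite ltn_ord.
under eq_bigr => k _ do rewrite !mxE.
rewrite (sum_ord_shift (fun k => Sinv_entry n a i.+1 k * S_col n a j.+1 k)).
under eq_sum_range => k k_in do rewrite Sinv_entryE // mulrBl -mulrA.
rewrite sumrB -mulr_sumr sum_inv_mul_S_col // sum_e_mul.
have s_neq0 : inv_sq_sum != 0 by rewrite gt_eqF // inv_sq_sum_gt0 //; lia.
have [j_lt_n | j_gt_n | j_n] := ltngtP j.+1 n.
- rewrite mulr0 sub0r; have [i_lt_n | i_ge_n] := ltnP i.+1 n.
    by rewrite andbT S_col_lower // opprK /e_ !eqSS -val_eqE; case: (val i == val j).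
  by rewrite andbF oppr0 -val_eqE /= gtn_eqF //; lia.
- by rewrite ltnNge ltn_ord in j_gt_n.
- rewrite j_n; have [i_lt_n | i_ge_n] := ltnP i.+1 n.
    have -> : minn i.+2 n = i.+2 by lia.
    have i2_in : (0 < i.+2 <= n)%N by lia.
    rewrite /= S_col_last // -val_eqE /= ltn_eqF /=; last by lia.
    by field; rewrite s_neq0 a_neq0.
  have -> : i = j by apply: val_inj => /=; lia.
  have -> : minn j.+2 n = n by lia.
  by rewrite andbF eqxx subr0 mulVf // mulf_neq0 // a_neq0 //; lia.
Qed.

Lemma D_mx_diag V d :
  D_mx n a V d = diag_mx (\row_j (if j.+1 == n then lambda2 n a V d else 0)).
Proof.
apply/matrixP => i j; rewrite !mxE.
have [<- | ij] := eqVneq i j; first by rewrite eqxx mulr1n.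
have ij_nat : (i == j :> nat) = false by exact: negbTE ij.
by rewrite ij_nat.
Qed.

Lemma Sigma_mx_mulS V d : Sigma_mx n a V d *m S_mx n a = S_mx n a *m D_mx n a V d.
Proof.
apply/matrixP => i j; rewrite D_mx_diag mul_mx_diag !mxE.
have i_in : (0 < i.+1 <= n)%N by rewrite ltn_ord.
have j_in : (0 < j.+1 <= n)%N by rewrite ltn_ord.
under eq_bigr => k _ do rewrite !mxE invfM mulrA -mulrA.
rewrite -mulr_sumr (sum_ord_shift (fun k => (a k)^-1 * S_col n a j.+1 k)).
rewrite sum_inv_mul_S_col //; case: eqP => [j_n | _]; last by rewrite !mulr0.
by rewrite j_n S_col_last // /lambda2 -/inv_sq_sum; ring.
Qed.

End EigenBasis.

Theorem corollary5p4 (R : realType) (d n : nat) (V : R) (tau : nat -> R)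
  (hd : (1 <= d)%N) (hn : (2 <= n)%N) (hV : 0 < V)
  (htau1 : - (d%:R / 2) < tau 1%N)
  (htau : forall i j : nat, (1 <= i)%N -> (i < j)%N -> (j <= n)%N -> tau i < tau j) :
  let a := fun i : nat => tau i + d%:R in
  S_mx n a \in unitmx /\
  D_mx n a V d = invmx (S_mx n a) *m Sigma_mx n a V d *m S_mx n a /\
  invmx (S_mx n a) = Sinv_mx n a.
Proof.
move=> a.
(* Only the positivity of the a_k matters. *)
have a_gt0 k : (0 < k <= n)%N -> 0 < a k.
  case/andP=> k_gt0 k_le_n.
  have tau1_le : tau 1%N <= tau k.
    have [<- | k_neq1] := eqVneq 1%N k; first exact: lexx.
    by apply/ltW/htau => //; lia.
  have d_ge0 : (0 : R) <= d%:R by rewrite ler0n.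
  rewrite /a; lra.
have a_neq0 k (k_in : (0 < k <= n)%N) : a k != 0 by rewrite gt_eqF ?a_gt0.
have SinvS := Sinv_mx_mulS a_neq0.
have [_ S_unit] := mulmx1_unit SinvS.
have invS : invmx (S_mx n a) = Sinv_mx n a.
  by rewrite -[LHS]mul1mx -SinvS -mulmxA mulmxV ?mulmx1.
split=> //; split=> //.
by rewrite -mulmxA (Sigma_mx_mulS a_neq0) mulKmx.
Qed.
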